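(* Let $K\ge2$, $0<q<p$ with $p+(K-1)q=1$, and $\phi\in\Delta$. Suppose $\theta,\theta'\in\Delta$ differ only at two positions $j,k$, where $a:=\theta_j=\theta'_k<b:=\theta_k=\theta'_j$, and suppose $\phi_j<\phi_k$. Then $D_{KL}(\phi,\mathcal{M}(\theta))<D_{KL}(\phi,\mathcal{M}(\theta'))$.
   Context: $\Delta=\{\theta\in\mathbb{R}^K:\theta_i\ge0,\sum_i\theta_i=1\}$. $\mathcal{M}(\theta)_y=q+(p-q)\theta_y$. $D_{KL}(\phi,\psi)=\sum_i\phi_i\log(\phi_i/\psi_i)$ with $0\log(0/\cdot)=0$. *)

From mathcomp Require Import all_boot all_order all_algebra.
From mathcomp Require Import reals exp.
Set Implicit Arguments. Unset Strict Implicit. Unset Printing Implicit Defensive.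
Import Order.TTheory GRing.Theory Num.Theory.
Local Open Scope ring_scope.

Definition in_simplex (R : realType) (K : nat) (th : 'I_K -> R) : Prop :=
  (forall i, 0 <= th i) /\ \sum_(i < K) th i = 1.

Definition Mmap (R : realType) (K : nat) (p q : R) (th : 'I_K -> R) : 'I_K -> R :=
  fun y => q + (p - q) * th y.

Definition DKL (R : realType) (K : nat) (phi psi : 'I_K -> R) : R :=
  \sum_(i < K) (if phi i == 0 then 0 else phi i * ln (phi i / psi i)).

From mathcomp Require Import all_boot all_order all_algebra.
From mathcomp Require Import reals exp.
From mathcomp Require Import ring.
Set Implicit Arguments. Unset Strict Implicit. Unset Printing Implicit Defensive.
Import Order.TTheory GRing.Theory Num.Theory.
Local Open Scope ring_scope.

(* Since M(theta) > 0, D(phi, M(theta)) is the negative entropy of phi minus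
   the cross entropy sum_i phi_i ln M(theta)_i, and only the latter depends on
   theta. Swapping theta_j and theta_k changes it by
   (phi_k - phi_j) (ln M(theta)_k - ln M(theta)_j), which is positive because
   phi_j < phi_k and M is strictly increasing in theta. *)

Lemma sumr_supp2 (V : nmodType) (I : finType) (j k : I) (h : I -> V) :
  j != k -> (forall i, i != j -> i != k -> h i = 0) ->
  \sum_i h i = h j + h k.
Proof.
move=> jk h0; rewrite (bigD1 j) // (bigD1 k) 1?eq_sym //= big1 ?addr0 //.
by move=> i /andP[ij ik]; apply: h0.
Qed.

Lemma Mmap_gt0 (R : realType) (K : nat) (p q : R) (th : 'I_K -> R) i :
  0 < q -> q <= p -> 0 <= th i -> 0 < Mmap p q th i.
Proof.
by move=> q0 qp th0; rewrite /Mmap ltr_wpDr // mulr_ge0 // subr_ge0.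
Qed.

Lemma Mmap_lt (R : realType) (K : nat) (p q : R) (th : 'I_K -> R) i i' :
  q < p -> th i < th i' -> Mmap p q th i < Mmap p q th i'.
Proof. by move=> qp lt_i; rewrite /Mmap ltrD2l ltr_pM2l // subr_gt0. Qed.

Lemma DKL_cross_entropy (R : realType) (K : nat) (phi psi : 'I_K -> R) :
  (forall i, 0 <= phi i) -> (forall i, 0 < psi i) ->
  DKL phi psi = \sum_i (if phi i == 0 then 0 else phi i * ln (phi i))
                - \sum_i phi i * ln (psi i).
Proof.
move=> phi0 psi0; rewrite /DKL -sumrB; apply: eq_bigr => i _.
have [->|phi_n0] := eqVneq (phi i) 0; first by rewrite mul0r subr0.
have phi_gt0 : 0 < phi i by rewrite lt_def phi_n0 phi0.
by rewrite lnM ?posrE ?invr_gt0 // lnV ?posrE // mulrDr mulrN.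
Qed.

Lemma DKL_sub (R : realType) (K : nat) (phi psi psi' : 'I_K -> R) :
  (forall i, 0 <= phi i) -> (forall i, 0 < psi i) -> (forall i, 0 < psi' i) ->
  DKL phi psi' - DKL phi psi = \sum_i phi i * (ln (psi i) - ln (psi' i)).
Proof.
move=> phi0 psi0 psi'0; rewrite !DKL_cross_entropy //.
under [RHS]eq_bigr do rewrite mulrBr.
by rewrite sumrB; ring.
Qed.

Theorem lemma1 (R : realType) (K : nat) (p q : R) (phi th th' : 'I_K -> R)
  (j k : 'I_K) (a b : R) :
  (2 <= K)%N -> 0 < q -> q < p -> p + (K - 1)%:R * q = 1 ->
  in_simplex phi -> in_simplex th -> in_simplex th' ->
  (forall i, i != j -> i != k -> th i = th' i) ->
  th j = a -> th' k = a -> th k = b -> th' j = b -> a < b ->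
  phi j < phi k ->
  DKL phi (Mmap p q th) < DKL phi (Mmap p q th').
Proof.
move=> _ q0 qp _ [phi0 _] [th0 _] [th'0 _] th_eq thj th'k thk th'j ab phi_jk.
have jk : j != k by apply: contraTneq ab => jk; rewrite -thj -thk jk ltxx.
have M_gt0 (t : 'I_K -> R) : (forall i, 0 <= t i) -> forall i, 0 < Mmap p q t i.
  by move=> t0 i; apply: Mmap_gt0 (ltW qp) _.
have [Mth_gt0 Mth'_gt0] := (M_gt0 _ th0, M_gt0 _ th'0).
rewrite -subr_gt0 DKL_sub // (sumr_supp2 jk); last first.
  by move=> i ij ik; rewrite /Mmap th_eq // subrr mulr0.
have -> : Mmap p q th' j = Mmap p q th k by rewrite /Mmap th'j thk.
have -> : Mmap p q th' k = Mmap p q th j by rewrite /Mmap th'k thj.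
have uv : ln (Mmap p q th j) < ln (Mmap p q th k).
  by rewrite ltr_ln ?posrE // Mmap_lt // thj thk.
set u := ln (Mmap p q th j) in uv *; set v := ln (Mmap p q th k) in uv *.
have -> : phi j * (u - v) + phi k * (v - u) = (phi k - phi j) * (v - u) by ring.
by rewrite mulr_gt0 // subr_gt0.
Qed.
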